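(* Let $p$ be a positive integer, $H$ a graph, $T$ a complete rooted ternary tree and $V\subseteq V(T(H))$ with $OC(T,V)\subsetneq V(T)$. Let $T_1,\dots,T_q$ be a minimal sequence of largest subtrees of $T$ with respect to $V$ lacking $p$. Let $T^*$ be the tree obtained from $T$ by deleting the vertices of $T_q$, and $V^*=V\cap V(T^*(H))$. Then $OC(T^*,V^* )\subsetneq V(T^* )$.
   Context: Complete rooted ternary tree: rooted tree, all root-leaf paths of equal length, every non-leaf vertex has exactly 3 children. Graph $T(H)$: for $V(H)=\{1,\dots,m\}$, vertices $v^i$ ($v\in V(T)$), each $\{v^1,\dots,v^m\}$ spanning a copy $H^v$ of $H$, plus edges $u^iv^i$ for $uv\in E(T)$; for a subtree $T'$, $T'(H)$ is the subgraph induced by the copies $H^v$, $v\in V(T')$. $OC(T,V)=\{u\in V(T): V(H^u)\cap V\neq\emptyset\}$. An immediate subtree of $T$ consists of a child of the root and all its descendants; it is largest w.r.t. $V$ if $|OC(T,V)\cap V(T')|$ is maximum among immediate subtrees. A sequence of largest subtrees: $T_1=T$, $V_1=V$, $T_{i+1}$ a largest immediate subtree of $T_i$ w.r.t. $V_i$, $V_{i+1}=V_i\cap V(T_{i+1}(H))$. It is minimal lacking $p$ if $|OC(T_1,V_1)|-|OC(T_q,V_q)|\geq p$ and $|OC(T_1,V_1)|-|OC(T_{q-1},V_{q-1})|<p$. *)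

From mathcomp Require Import all_boot.
Set Implicit Arguments. Unset Strict Implicit. Unset Printing Implicit Defensive.

(* The complete rooted ternary tree of depth d: vertices are addresses,
   i.e. words over {0,1,2} of length <= d; the root is the empty word and the
   children of a word s (of length < d) are the words rcons s c. *)
Definition tvert (d : nat) : finType := {k : 'I_d.+1 & k.-tuple 'I_3}.

Definition addr (d : nat) (v : tvert d) : seq 'I_3 := val (tagged v).

Definition tedge (d : nat) : rel (tvert d) :=
  fun u v => (addr v == rcons (addr u) (last ord0 (addr v)) :> seq _)
             && (size (addr v) == (size (addr u)).+1)
          || (addr u == rcons (addr v) (last ord0 (addr u)) :> seq _)
             && (size (addr u) == (size (addr v)).+1).

Definition subtree (d : nat) (s : seq 'I_3) : {set tvert d} :=
  [set v | prefix s (addr v)].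

(* The graph T(H): vertex set V(T) x V(H); edges inside each copy H^v, and
   u^i v^i for uv an edge of T. *)
Definition TH_edge (d : nat) (H : finType) (e : rel H) : rel (tvert d * H) :=
  fun x y => ((x.1 == y.1) && e x.2 y.2) || ((x.2 == y.2) && tedge x.1 y.1).

Definition VTH (d : nat) (H : finType) (A : {set tvert d}) : {set tvert d * H} :=
  [set x | x.1 \in A].

Definition OC (d : nat) (H : finType) (A : {set tvert d}) (V : {set tvert d * H})
  : {set tvert d} := [set u in A | [exists h : H, (u, h) \in V]].

(* i-th subtree of the sequence determined by child choices cs
   (0-based: T_(i+1) is rooted at take i cs) and V_(i+1). *)
Definition Tseq (d : nat) (cs : seq 'I_3) (i : nat) : {set tvert d} :=
  subtree d (take i cs).
Definition Vseq (d : nat) (H : finType) (V : {set tvert d * H}) (cs : seq 'I_3)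
  (i : nat) : {set tvert d * H} := V :&: VTH H (Tseq d cs i).

Definition largest_child (d : nat) (H : finType) (s : seq 'I_3)
  (W : {set tvert d * H}) (c : 'I_3) : Prop :=
  forall c' : 'I_3,
    #|OC (subtree d s) W :&: subtree d (rcons s c')|
      <= #|OC (subtree d s) W :&: subtree d (rcons s c)|.

(* cs encodes a sequence of largest subtrees T_1 = T, ..., T_q with
   q = size cs + 1 (each T_(j+1) is a non-leaf subtree). *)
Definition largest_seq (d : nat) (H : finType) (V : {set tvert d * H})
  (cs : seq 'I_3) : Prop :=
  size cs <= d /\
  forall j, j < size cs ->
    largest_child (take j cs) (Vseq V cs j) (nth ord0 cs j).

Definition minimal_lacking (d : nat) (H : finType) (V : {set tvert d * H})
  (cs : seq 'I_3) (p : nat) : Prop :=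
  let q := (size cs).+1 in
  1 < q /\
  p <= #|OC (Tseq d cs 0) (Vseq V cs 0)| - #|OC (Tseq d cs q.-1) (Vseq V cs q.-1)| /\
  #|OC (Tseq d cs 0) (Vseq V cs 0)| - #|OC (Tseq d cs q.-2) (Vseq V cs q.-2)| < p.

From mathcomp Require Import all_boot.
Set Implicit Arguments. Unset Strict Implicit. Unset Printing Implicit Defensive.

(* Suppose every vertex outside T_q is occupied.  Then a sibling of T_q is
   entirely occupied; sibling subtrees all have the same size, so the largest
   child T_q has at least as many occupied vertices as it has vertices, i.e.
   it is entirely occupied as well.  Hence all of T would be occupied. *)

Lemma addr_inj d : injective (@addr d).
Proof.
move=> [k t] [k' t']; rewrite /addr /= => Ett'.
have Ekk' : k = k' by apply: val_inj; rewrite /= -(size_tuple t) -(size_tuple t') Ett'.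
by subst k'; congr existT; apply: val_inj.
Qed.

Lemma OCE d (H : finType) (A : {set tvert d}) (V : {set tvert d * H}) :
  OC A V = A :&: OC [set: tvert d] V.
Proof. by apply/setP => u; rewrite !inE. Qed.

Lemma OC_setIVTH d (H : finType) (A : {set tvert d}) (V : {set tvert d * H}) :
  OC A (V :&: VTH H A) = OC A V.
Proof.
apply/setP => u; rewrite !inE; case: (boolP (u \in A)) => //= uA.
by apply/existsP/existsP => -[h Vh]; exists h; rewrite !inE uA andbT in Vh *.
Qed.

Section Reprefix.
Variables (d : nat) (s1 s2 : seq 'I_3).
Hypothesis size_s12 : size s1 = size s2.

(* Keeping the tag is harmless: on [subtree d s1] the new address has the same length. *)
Definition reprefix (v : tvert d) : tvert d :=
  Tagged (fun k : 'I_d.+1 => k.-tuple 'I_3)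
    (insubd (tagged v) (s2 ++ drop (size s1) (addr v))).

Lemma addr_reprefix v : v \in subtree d s1 ->
  addr (reprefix v) = s2 ++ drop (size s1) (addr v).
Proof.
rewrite inE => /prefixP [w Ev]; rewrite /addr /= val_insubd -/(addr v).
suff -> : size (s2 ++ drop (size s1) (addr v)) == tag v by [].
by rewrite -(size_tuple (tagged v)) -/(addr v) Ev drop_size_cat // !size_cat size_s12.
Qed.

Lemma card_subtree_le : #|subtree d s1| <= #|subtree d s2|.
Proof.
have addr_prefix v : v \in subtree d s1 -> addr v = s1 ++ drop (size s1) (addr v).
  by rewrite inE => /prefixP [w ->]; rewrite drop_size_cat.
rewrite -(@card_in_imset _ _ reprefix).
  apply/subset_leq_card/subsetP => _ /imsetP [v v1 ->].
  by rewrite inE addr_reprefix // prefix_prefix.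
move=> u v u1 v1 /(congr1 (@addr d)); rewrite !addr_reprefix // => /eqP.
rewrite eqseq_cat // eqxx => /eqP Edrop.
by apply: addr_inj; rewrite (addr_prefix u u1) (addr_prefix v v1) Edrop.
Qed.

End Reprefix.

Lemma card_subtree_eq d (s1 s2 : seq 'I_3) : size s1 = size s2 ->
  #|subtree d s1| = #|subtree d s2|.
Proof. by move=> E; apply/eqP; rewrite eqn_leq !card_subtree_le. Qed.

Lemma subtree_rcons_sub d (s : seq 'I_3) c : subtree d (rcons s c) \subset subtree d s.
Proof. by apply/subsetP => v; rewrite !inE; apply/prefix_trans/prefix_rcons. Qed.

Lemma disjoint_subtree_rcons d (s : seq 'I_3) c c' : c != c' ->
  [disjoint subtree d (rcons s c) & subtree d (rcons s c')].
Proof.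
move=> neq_cc'; rewrite -setI_eq0; apply/eqP/setP => v; rewrite !inE !prefixE !size_rcons.
apply/negbTE/negP => /andP [/eqP-> /eqP /rcons_inj [] Ecc'].
by rewrite Ecc' eqxx in neq_cc'.
Qed.

Lemma largest_child_full d (H : finType) (s : seq 'I_3) (W : {set tvert d * H}) c c' :
  largest_child s W c ->
  subtree d (rcons s c') \subset OC (subtree d s) W ->
  subtree d (rcons s c) \subset OC (subtree d s) W.
Proof.
move=> /(_ c') largest full_c'.
set X := OC (subtree d s) W :&: subtree d (rcons s c) in largest.
suff <- : X = subtree d (rcons s c) by apply: subsetIl.
apply/eqP; rewrite eqEcard subsetIr /=.
rewrite (@card_subtree_eq d (rcons s c) (rcons s c')) ?size_rcons //.
by apply: leq_trans largest; rewrite (setIidPr full_c').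
Qed.

Theorem lemma6 (p : nat) (H : finType) (e : rel H) (d : nat)
  (V : {set tvert d * H}) (cs : seq 'I_3) :
  0 < p ->
  symmetric e -> irreflexive e ->
  OC [set: tvert d] V \proper [set: tvert d] ->
  largest_seq V cs ->
  minimal_lacking V cs p ->
  let Tstar := [set: tvert d] :\: Tseq d cs (size cs) in
  let Vstar := V :&: VTH H Tstar in
  OC Tstar Vstar \proper Tstar.
Proof.
(* Minimality is only needed for q > 1, so that T_q has siblings. *)
move=> _ _ _ /proper_subn not_full [_ largest] [q_gt1 _] /=.
rewrite OC_setIVTH OCE; apply: properIl; apply: contra not_full => full_star.
case/lastP: cs q_gt1 largest full_star => // s c _ /(_ (size s)).
rewrite size_rcons => /(_ (ltnSn _)).
rewrite /Vseq /Tseq -cats1 take_size_cat // cats1 nth_rcons ltnn eqxx.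
rewrite -(size_rcons s c) take_size setTD.
move=> largest full_out.
have full_sibling : subtree d (rcons s (lift c ord0))
    \subset OC (subtree d s) (V :&: VTH H (subtree d s)).
  rewrite OC_setIVTH OCE subsetI subtree_rcons_sub.
  apply: subset_trans full_out; rewrite -disjoints_subset.
  by apply: disjoint_subtree_rcons; rewrite eq_sym neq_lift.
have := largest_child_full largest full_sibling.
rewrite OC_setIVTH OCE subsetI => /andP [_ full_c].
by rewrite -{1}(setUCr (subtree d (rcons s c))) subUset full_c full_out.
Qed.
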